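(* Let $L\ge 2$, let $f\in C^2(\mathbb{R}^n,\mathbb{R})$ with $\nabla_x f(0)\neq 0$, and define $F(w_1,\dots,w_L):=f\left(\prod_{i=1}^L w_i\right)$ for $w_1,\dots,w_L\in\mathbb{R}^n$ (entrywise product). Let $$S:=\{(w_1,\dots,w_L): \text{there exist } i\neq j \text{ in } [L] \text{ with } w_i=w_j=0,\ \text{and } w_k \text{ has all entries nonzero for every } k\notin\{i,j\}\}.$$ Then every point of $S$ is a saddle point of $F$.
   Context: A saddle point of a function $F\in C^2$ is a point where $\nabla F=0$ and the Hessian $\nabla^2 F$ is not positive semidefinite. The map $x=g(w)=\prod_{i=1}^L w_i$ is the deep diagonal reparameterization. *)

From HB Require Import structures.
From mathcomp Require Import all_boot all_order all_algebra.
From mathcomp Require Import all_classical all_reals all_analysis.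
Set Implicit Arguments. Unset Strict Implicit. Unset Printing Implicit Defensive.
Import Order.TTheory GRing.Theory Num.Theory.
Import numFieldNormedType.Exports.
Local Open Scope ring_scope.

(* A vector in R^n is a 1 x n row matrix; an L-tuple
   (w_1,...,w_L) of vectors of R^n is the L x n matrix whose k-th row is w_k. *)

Section Defs.
Variable R : realType.

Definition partial {m n : nat} (f : 'M[R]_(m, n) -> R) (a : 'I_m * 'I_n)
  (x : 'M[R]_(m, n)) : R := derive f x (delta_mx a.1 a.2).

Definition has_partial {m n : nat} (f : 'M[R]_(m, n) -> R) (a : 'I_m * 'I_n)
  (x : 'M[R]_(m, n)) : Prop := derivable f x (delta_mx a.1 a.2).

Definition C2 {m n : nat} (f : 'M[R]_(m, n) -> R) : Prop :=
  continuous f /\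
  (forall a x, has_partial f a x) /\
  (forall a, continuous (partial f a)) /\
  (forall a b x, has_partial (partial f a) b x) /\
  (forall a b, continuous (partial (partial f a) b)).

Definition grad {m n : nat} (f : 'M[R]_(m, n) -> R) (x : 'M[R]_(m, n))
  : 'M[R]_(m, n) := \matrix_(i, j) partial f (i, j) x.

Definition hessian {m n : nat} (f : 'M[R]_(m, n) -> R) (x : 'M[R]_(m, n))
  (a b : 'I_m * 'I_n) : R := partial (partial f a) b x.

Definition psd {I : finType} (H : I -> I -> R) : Prop :=
  forall v : I -> R, 0 <= \sum_(a : I) \sum_(b : I) v a * H a b * v b.

Definition saddle_point {m n : nat} (F : 'M[R]_(m, n) -> R) (x : 'M[R]_(m, n))
  : Prop := C2 F /\ grad F x = 0 /\ ~ psd (hessian F x).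

Definition diag_prod {L n : nat} (W : 'M[R]_(L, n)) : 'M[R]_(1, n) :=
  \row_j \prod_(k < L) W k j.

Definition S_set {L n : nat} (W : 'M[R]_(L, n)) : Prop :=
  exists i j : 'I_L, i != j /\ row i W = 0 /\ row j W = 0 /\
    forall k : 'I_L, k != i -> k != j -> forall l : 'I_n, W k l != 0.

End Defs.

From HB Require Import structures.
From mathcomp Require Import all_boot all_order all_algebra.
From mathcomp Require Import all_classical all_reals all_analysis.
Import Order.TTheory GRing.Theory Num.Theory.
Import numFieldNormedType.Exports.
Local Open Scope ring_scope.

(* Write g for [diag_prod] and F = f o g.  Moving the coordinate (k, l) of W
   by h moves g(W) by h * prod_(m <> k) W m l along the l-th axis, so
   d_(k,l) F (W) = prod_(m <> k) W m l * d_l f (g W).  Differentiating once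
   more, for a = (k, l) and b = (k', l'),
     d_b d_a F = (d_a g_l)(d_b g_l') d_l' d_l f (g W)
                 + [l = l', k <> k'] d_l f (g W) * prod_(m <> k, k') W m l.
   If the rows i and j of W vanish, then g(W) = 0 and every d_a g vanishes, so
   the gradient is 0 and on the coordinates (i, l), (j, l) the Hessian is the
   block [[0, c], [c, 0]] with c = d_l f (0) * prod_(m <> i, j) W m l.  Choosing
   l with d_l f (0) <> 0 makes c <> 0, and such a block is indefinite. *)

Section DirectionalDerivative.
Local Open Scope classical_set_scope.
Context {R : realType}.

Lemma mulr_dnbhs0_cvg (c : R) : c != 0 -> (fun h : R => c * h) @ 0^' --> 0^'.
Proof.
move=> c0 A /= A0.
have ch0 : (fun h : R => c * h) @ 0 --> 0.
  by rewrite -[X in _ --> X](mulr0 c); apply: cvgMl_tmp; exact: cvg_id.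
have : \forall h \near 0, c * h != 0 -> A (c * h) := ch0 _ A0.
apply: filterS => h /= Ach h0; apply: Ach.
by rewrite mulf_neq0.
Qed.

Lemma eq_increments_derive {V1 V2 W : normedModType R}
    {f1 : V1 -> W} {f2 : V2 -> W} {x1 v1 x2 v2} :
  (forall h : R, f1 (h *: v1 + x1) - f1 x1 = f2 (h *: v2 + x2) - f2 x2) ->
  (derivable f1 x1 v1 <-> derivable f2 x2 v2) /\ 'D_v1 f1 x1 = 'D_v2 f2 x2.
Proof.
move=> f12.
have quotients_eq :
    (fun h : R => h^-1 *: ((f1 \o shift x1) (h *: v1) - f1 x1)) =
    (fun h : R => h^-1 *: ((f2 \o shift x2) (h *: v2) - f2 x2)).
  by apply/funext => h /=; rewrite f12.
by rewrite /derivable /derive quotients_eq.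
Qed.

Lemma derive_scaled_direction {V W : normedModType R} {f : V -> W} {x v : V}
    (c : R) :
  derivable f x v -> derivable f x (c *: v) /\ 'D_(c *: v) f x = c *: 'D_v f x.
Proof.
move=> df.
have [->|c0] := eqVneq c 0.
  by rewrite !scale0r; split; [exact: derivable0 | exact: derive0].
set q := fun h : R => h^-1 *: ((f \o shift x) (h *: v) - f x).
have quotientE :
    (fun h : R => h^-1 *: ((f \o shift x) (h *: (c *: v)) - f x)) =
    (fun h => c *: q (c * h)).
  apply/funext => h; rewrite /q /= scalerA [h * c]mulrC scalerA invfM.
  by rewrite mulrA mulfV // mul1r.
have qc : (fun h => c *: q (c * h)) @ 0^' --> c *: 'D_v f x.
  by apply: cvgZl_tmp; apply: cvg_comp; [exact: mulr_dnbhs0_cvg | exact: df].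
rewrite /derivable /derive quotientE.
split; first by apply/cvg_ex; exists (c *: 'D_v f x).
exact: cvg_lim.
Qed.

End DirectionalDerivative.

Section Continuity.
Context {R : numFieldType}.

Lemma continuous_mx_entries {T : topologicalType} {m n}
    (h : T -> 'M[R]_(m, n)) :
  (forall i j, continuous (fun x => h x i j)) -> continuous h.
Proof.
move=> hc x; apply/cvg_mx_entourageP => A entA.
apply: filter_forall => i; apply: filter_forall => j.
have /cvg_app_entourageP/(_ A entA) := hc i j x.
by apply: filterS => y Ay; rewrite /= inE.
Qed.

Lemma continuous_prod {T : topologicalType} {I : Type} {s : seq I} {P : pred I}
    (F : I -> T -> R) :
  (forall i, continuous (F i)) ->
  continuous (fun x => \prod_(i <- s | P i) F i x).
Proof.
move=> Fc; elim: s => [|a s IHs].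
  by under eq_fun do rewrite big_nil; exact: cst_continuous.
under eq_fun do rewrite big_cons.
by case: (P a) => // x; apply: continuousM; [exact: Fc | exact: IHs].
Qed.

End Continuity.

Lemma prod_add_indicator {S : comPzRingType} {I : finType} (P : pred I) (k : I)
    (h : S) (x : I -> S) :
  \prod_(m | P m) (h * (m == k)%:R + x m) =
  \prod_(m | P m) x m
  + (if P k then h * \prod_(m | P m && (m != k)) x m else 0).
Proof.
case: ifP => Pk; last first.
  rewrite addr0; apply: eq_bigr => m Pm.
  have /negPf -> : m != k by apply: contraFneq Pk => <-.
  by rewrite mulr0 add0r.
rewrite (bigD1 k) //= [in RHS](bigD1 k) //= eqxx mulr1 mulrDl addrC.
by congr (_ * _ + _ * _); apply: eq_bigr => m /andP[_ /negPf ->];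
  rewrite mulr0 add0r.
Qed.

Lemma sum_support2 {S : nmodType} {I : finType} {x y : I} {u : I -> S} :
  x != y -> (forall z, z != x -> z != y -> u z = 0) -> \sum_z u z = u x + u y.
Proof.
move=> xy u0; rewrite (bigD1 x) //= (bigD1 y) /=; last by rewrite eq_sym.
by rewrite big1 ?addr0 // => z /andP[zx zy]; exact: u0.
Qed.

Lemma psd_zero_diag {R : realType} {I : finType} {H : I -> I -> R} (x y : I) :
  psd H -> x != y -> H x x = 0 -> H y y = 0 -> H x y + H y x = 0.
Proof.
move=> Hpsd xy Hxx Hyy; set d := H x y + H y x.
(* The quadratic form at e_x - d e_y is - d ^ 2. *)
pose v a := if a == x then 1 else if a == y then - d else 0.
have v0 z : z != x -> z != y -> v z = 0 by rewrite /v => /negPf -> /negPf ->.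
have vx : v x = 1 by rewrite /v eqxx.
have vy : v y = - d by rewrite /v eq_sym (negPf xy) eqxx.
have sum_row a :
    \sum_b v a * H a b * v b = v a * H a x * v x + v a * H a y * v y.
  by apply: (sum_support2 xy) => z zx zy; rewrite (v0 z zx zy) mulr0.
have := Hpsd v; rewrite (sum_support2 xy); last first.
  by move=> z zx zy; apply: big1 => b _; rewrite (v0 z zx zy) !mul0r.
rewrite !sum_row vx vy Hxx Hyy !mulr0 !mul0r add0r addr0 !mul1r mulr1.
rewrite [- d * _]mulrC -mulrDl -/d mulrN oppr_ge0 -expr2 => d2_le0.
by apply/eqP; rewrite -sqrf_eq0 eq_le d2_le0 sqr_ge0.
Qed.

Lemma row_eq0_entry {R : nmodType} {m n} {V : 'M[R]_(m, n)} {i} l :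
  row i V = 0 -> V i l = 0.
Proof. by move/rowP/(_ l); rewrite !mxE. Qed.

Lemma grad_neq0_partial {R : realType} {m n} {f : 'M[R]_(m, n) -> R} {x} :
  grad f x != 0 -> exists a, partial f a x != 0.
Proof.
move=> fx; apply/existsP; apply: contraNT fx => /existsPn f0.
by apply/eqP/matrixP => i j; rewrite !mxE; apply/eqP/negPn/f0.
Qed.

Section DiagProd.
Context {R : realType} {L n : nat}.
Implicit Types (V : 'M[R]_(L, n)) (a b : 'I_L * 'I_n).
Local Notation g := (@diag_prod R L n).

(* [prod_but a V] is the partial derivative of the entry a.2 of [g V] with
   respect to V a.1 a.2. *)
Definition prod_but a V : R := \prod_(m < L | m != a.1) V m a.2.

Definition dprod_but a b V : R :=
  if (b.2 == a.2) && (b.1 != a.1) then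
    \prod_(m < L | (m != a.1) && (m != b.1)) V m a.2
  else 0.

Lemma diag_prod_shift b V (h : R) :
  g (h *: delta_mx b.1 b.2 + V) =
  h *: (prod_but b V *: delta_mx ord0 b.2) + g V.
Proof.
apply/rowP => j; rewrite !mxE eqxx /=.
under eq_bigr do rewrite !mxE.
have [<-|bj] := eqVneq b.2 j.
  under eq_bigr do rewrite andbT.
  by rewrite (prod_add_indicator predT) mulr1 addrC.
under eq_bigr do rewrite andbF mulr0 add0r.
by rewrite !mulr0 add0r.
Qed.

Lemma prod_but_shift a b V (h : R) :
  prod_but a (h *: delta_mx b.1 b.2 + V) = prod_but a V + h * dprod_but a b V.
Proof.
rewrite /prod_but /dprod_but.
under eq_bigr do rewrite !mxE.
have [ba|ba] := eqVneq b.2 a.2.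
  under eq_bigr do rewrite andbT.
  rewrite (prod_add_indicator (fun m => m != a.1)) /=.
  by case: ifP; rewrite ?mulr0.
under eq_bigr do rewrite andbF mulr0 add0r.
by rewrite mulr0 addr0.
Qed.

Lemma dprod_butC a b V : dprod_but a b V = dprod_but b a V.
Proof.
rewrite /dprod_but [a.1 == b.1]eq_sym.
have [e|] := eqVneq b.2 a.2 => //=; case: (b.1 != a.1) => //.
by rewrite e; apply: eq_bigl => m; rewrite andbC.
Qed.

Lemma dprod_but_diag a V : dprod_but a a V = 0.
Proof. by rewrite /dprod_but !eqxx. Qed.

Lemma dprod_but_same_column k k' l V : k != k' ->
  dprod_but (k, l) (k', l) V = \prod_(m < L | (m != k) && (m != k')) V m l.
Proof. by rewrite /dprod_but /= eqxx eq_sym => ->. Qed.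

Lemma continuous_diag_prod : continuous g.
Proof.
apply: continuous_mx_entries => i j; under eq_fun do rewrite mxE.
by apply: (continuous_prod (fun m V => V m j)) => m; exact: coord_continuous.
Qed.

Lemma continuous_prod_but a : continuous (prod_but a).
Proof.
by apply: (continuous_prod (fun m V => V m a.2)) => m; exact: coord_continuous.
Qed.

Lemma continuous_dprod_but a b : continuous (dprod_but a b).
Proof.
rewrite /dprod_but; case: (_ && _); last exact: cst_continuous.
by apply: (continuous_prod (fun m V => V m a.2)) => m; exact: coord_continuous.
Qed.

Lemma partial_prod_but a b V :
  has_partial (prod_but a) b V /\ partial (prod_but a) b V = dprod_but a b V.
Proof.
rewrite /has_partial /partial.
have incr h : prod_but a (h *: delta_mx b.1 b.2 + V) - prod_but a V =
    id (h *: dprod_but a b V + 0 : R^o) - id 0.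
  by rewrite prod_but_shift addr0 subr0 addrC addKr.
have [eq_derivable ->] := eq_increments_derive (V2 := R^o) (f2 := id) incr.
split; first by apply/eq_derivable; exact: derivable_id.
exact: derive_id.
Qed.

Lemma partial_comp_diag_prod {phi : 'rV[R]_n -> R} b V :
  has_partial phi (ord0, b.2) (g V) ->
  has_partial (phi \o g) b V /\
  partial (phi \o g) b V = prod_but b V * partial phi (ord0, b.2) (g V).
Proof.
rewrite /has_partial /partial.
move=> /(derive_scaled_direction (prod_but b V)) [dphiZ dphiZE].
have incr h : (phi \o g) (h *: delta_mx b.1 b.2 + V) - (phi \o g) V =
    phi (h *: (prod_but b V *: delta_mx ord0 b.2) + g V) - phi (g V).
  by rewrite /= diag_prod_shift.
have [eq_derivable ->] := eq_increments_derive incr.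
by split; [exact/eq_derivable | rewrite dphiZE].
Qed.

Lemma prod_but_eq0 {i j : 'I_L} {V} a :
  i != j -> row i V = 0 -> row j V = 0 -> prod_but a V = 0.
Proof.
move=> ij Vi Vj; rewrite /prod_but.
have [ai|ai] := eqVneq a.1 i.
  by rewrite (bigD1 j) /= ?(row_eq0_entry _ Vj) ?mul0r // ai eq_sym.
by rewrite (bigD1 i) /= ?(row_eq0_entry _ Vi) ?mul0r // eq_sym.
Qed.

Lemma diag_prod_eq0 {i V} : row i V = 0 -> g V = 0.
Proof.
by move=> Vi; apply/rowP => l; rewrite !mxE (bigD1 i) //= row_eq0_entry ?mul0r.
Qed.

Context {f : 'rV[R]_n -> R}.
Hypothesis f_C2 : C2 f.
Let f_has_partial : forall p x, has_partial f p x := f_C2.2.1.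
Let pf_has_partial : forall p q x, has_partial (partial f p) q x :=
  f_C2.2.2.2.1.

Lemma partial_comp_diag_prodE a :
  partial (f \o g) a =
  fun V => prod_but a V * partial f (ord0, a.2) (g V).
Proof.
apply/funext => V.
by have [_ ->] := partial_comp_diag_prod a V (f_has_partial _ _).
Qed.

Lemma hessian_comp_diag_prod a b V :
  has_partial (partial (f \o g) a) b V /\
  hessian (f \o g) V a b =
    prod_but a V * (prod_but b V * hessian f (g V) (ord0, a.2) (ord0, b.2))
    + partial f (ord0, a.2) (g V) * dprod_but a b V.
Proof.
rewrite /hessian partial_comp_diag_prodE.
have [dprod dprodE] := partial_prod_but a b V.
have [dpf dpfE] := partial_comp_diag_prod b V (pf_has_partial (ord0, a.2) _ _).
rewrite /has_partial /partial in dprod dprodE dpf dpfE *.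
split; first exact: derivableM dprod dpf.
by have := deriveM dprod dpf; rewrite dprodE dpfE => <-.
Qed.

Lemma C2_comp_diag_prod : C2 (f \o g).
Proof.
have [f_cont [_ [pf_cont [_ hf_cont]]]] := f_C2.
have comp_cont (phi : 'rV[R]_n -> R) :
    continuous phi -> continuous (phi \o g).
  move=> phi_cont V; apply: continuous_comp; first exact: continuous_diag_prod.
  exact: phi_cont.
split; first exact: comp_cont f_cont.
split.
  by move=> a V; case: (partial_comp_diag_prod a V (f_has_partial _ _)).
split.
  move=> a; rewrite partial_comp_diag_prodE => V.
  by apply: continuousM; [exact: continuous_prod_but | exact: comp_cont].
split; first by move=> a b V; case: (hessian_comp_diag_prod a b V).
move=> a b; have -> : partial (partial (f \o g) a) b = fun V =>
    prod_but a V * (prod_but b V * hessian f (g V) (ord0, a.2) (ord0, b.2))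
    + partial f (ord0, a.2) (g V) * dprod_but a b V.
  by apply/funext => V; rewrite -(hessian_comp_diag_prod a b V).2.
move=> V; apply: (continuousD (f := fun V => prod_but a V * _)).
  exact: continuousM (continuous_prod_but a V)
    (continuousM (continuous_prod_but b V) (comp_cont _ (hf_cont _ _) V)).
exact: continuousM (comp_cont _ (pf_cont _) V) (continuous_dprod_but a b V).
Qed.

Section TwoZeroRows.
Context {i j : 'I_L} {V : 'M[R]_(L, n)}.
Hypotheses (ij : i != j) (Vi : row i V = 0) (Vj : row j V = 0).

Lemma grad_comp_diag_prod_eq0 : grad (f \o g) V = 0.
Proof.
apply/matrixP => k l; rewrite !mxE.
rewrite (partial_comp_diag_prod (k, l) V (f_has_partial _ _)).2.
by rewrite (prod_but_eq0 _ ij Vi Vj) mul0r.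
Qed.

Lemma hessian_comp_diag_prod_zero_rows a b :
  hessian (f \o g) V a b = partial f (ord0, a.2) 0 * dprod_but a b V.
Proof.
rewrite (hessian_comp_diag_prod a b V).2 !(prod_but_eq0 _ ij Vi Vj).
by rewrite (diag_prod_eq0 Vi) mul0r add0r.
Qed.

End TwoZeroRows.

End DiagProd.

Theorem theorem2 (R : realType) (L n : nat) (f : 'M[R]_(1, n) -> R) :
  (2 <= L)%N -> C2 f -> grad f 0 != 0 ->
  forall W : 'M[R]_(L, n), S_set W ->
    saddle_point (fun V : 'M[R]_(L, n) => f (diag_prod V)) W.
Proof.
(* [2 <= L] is implied by [S_set W]. *)
move=> _ f_C2 grad_neq0 W [i [j [ij [Wi [Wj W_neq0]]]]].
split; first exact: C2_comp_diag_prod.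
split; first exact: grad_comp_diag_prod_eq0 ij Wi Wj.
have [[k l] fl_neq0] := grad_neq0_partial grad_neq0.
rewrite (ord1 k) in fl_neq0.
have p_neq0 : \prod_(m < L | (m != i) && (m != j)) W m l != 0.
  by apply/prodf_neq0 => m /andP[mi mj]; exact: W_neq0.
have il_jl : (i, l) != (j, l) by rewrite xpair_eqE negb_and ij.
move=> /(psd_zero_diag (i, l) (j, l)) /(_ il_jl).
rewrite !(hessian_comp_diag_prod_zero_rows f_C2 ij Wi Wj).
rewrite !dprod_but_diag mulr0 => /(_ erefl erefl) /eqP.
rewrite [dprod_but (j, l) _ _]dprod_butC !dprod_but_same_column // -mulr2n.
by rewrite mulrn_eq0 /= mulf_eq0 (negPf fl_neq0) (negPf p_neq0).
Qed.
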